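(* Let $G=(V,E)$ be a graph and $v\in V$. Then $v\in\mathrm{corona}(G)\setminus\mathrm{core}(G)$ if and only if either (1) $v\in V^-$ and $v$ is not isolated, or (2) $v\in V^0$, there exists a set $S\subseteq V\setminus\{v\}$ with $|S|=\gamma(G)$ that dominates $G-v$ and satisfies $S\cap N[v]\neq\emptyset$, and $\gamma(G_v+u)=\gamma(G)$.
   Context: All graphs are finite, simple and undirected. $N[v]$ is the closed neighborhood of $v$. $\gamma(G)$ is the domination number; a minimum dominating set (mds) is a dominating set of size $\gamma(G)$. $\mathrm{core}(G)$ is the set of vertices in every mds, $\mathrm{corona}(G)$ the set of vertices in at least one mds. $G-v$ is $G$ with $v$ deleted; $V^0=\{v:\gamma(G-v)=\gamma(G)\}$, $V^-=\{v:\gamma(G-v)<\gamma(G)\}$. $G_v+u$ is the graph obtained from $G$ by adding a new vertex $u$ and the single edge $uv$. A vertex is isolated if it has no neighbors. *)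

(* A simple graph on a finite vertex type T is an edge relation
   e : rel T that is symmetric and irreflexive. Induced subgraphs are given by a
   vertex set A : {set T} together with (the restriction of) e. *)
From mathcomp Require Import all_boot.
Set Implicit Arguments. Unset Strict Implicit. Unset Printing Implicit Defensive.

Section Dom.
Variable T : finType.
Implicit Types (e : rel T) (A S : {set T}) (v : T).

Definition cnbhd e v : {set T} := [set w | (w == v) || e v w].

Definition dominating e A S : bool :=
  (S \subset A) && [forall x in A, [exists y in S, (y == x) || e x y]].

(* domination number of G[A] (A itself dominates, so the min is attained) *)
Definition gamma e A : nat :=
  \big[minn/#|A|]_(S : {set T} | dominating e A S) #|S|.

Definition is_mds e S : bool := dominating e setT S && (#|S| == gamma e setT).

Definition core e : {set T} := [set v | [forall S : {set T}, is_mds e S ==> (v \in S)]].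
Definition corona e : {set T} := [set v | [exists S : {set T}, is_mds e S && (v \in S)]].

(* G - v is G[V \ {v}] *)
Definition V0 e : {set T} := [set v | gamma e (setT :\ v) == gamma e setT].
Definition Vminus e : {set T} := [set v | gamma e (setT :\ v) < gamma e setT].

Definition isolated e v : bool := [forall w, ~~ e v w].

(* G_v + u : new vertex u = None, adjacent only to v *)
Definition add_leaf e v : rel (option T) :=
  fun a b => match a, b with
  | Some x, Some y => e x y
  | None, Some y => y == v
  | Some x, None => x == v
  | None, None => false
  end.
End Dom.

From mathcomp Require Import all_boot.
Set Implicit Arguments. Unset Strict Implicit. Unset Printing Implicit Defensive.

(* A minimum dominating
   set avoiding v dominates G - v and meets N[v]; conversely a dominating set
   X of G - v extends to a dominating set w |: X of G for any w in N[v], which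
   is minimum when v is in V^-.  Finally a dominating set of G_v + u projects
   to one of G containing v and of no larger size, so that
   gamma(G_v + u) = gamma(G) holds exactly when v lies in the corona. *)

Lemma bigmin_seq_le (I : eqType) (r : seq I) (P : pred I) (F : I -> nat) m j :
  j \in r -> P j -> \big[minn/m]_(i <- r | P i) F i <= F j.
Proof.
elim: r => // i r IHr; rewrite inE big_cons => /orP[/eqP <- Pj | jr Pj].
  by rewrite Pj geq_minl.
case: ifP => _; last exact: IHr.
exact: leq_trans (geq_minr _ _) (IHr jr Pj).
Qed.

Section Domination.
Variables (T : finType) (e : rel T).
Implicit Types (A S X D : {set T}) (v w : T).

Lemma dominatingP A S :
  reflect (S \subset A /\ forall x, x \in A -> exists2 y, y \in S & (y == x) || e x y)
          (dominating e A S).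
Proof.
apply: (iffP andP) => [[sSA /forall_inP domS] | [sSA domS]]; split => //.
  by move=> x /domS /exists_inP.
by apply/forall_inP => x /domS /exists_inP.
Qed.

Lemma gamma_le_card A S : dominating e A S -> gamma e A <= #|S|.
Proof. by move=> domS; apply: bigmin_seq_le; rewrite ?mem_index_enum. Qed.

Lemma gamma_attained A : exists2 S, dominating e A S & #|S| = gamma e A.
Proof.
apply: (big_ind (fun m => exists2 S, dominating e A S & #|S| = m)).
- exists A => //; apply/dominatingP; split => // x xA.
  by exists x; rewrite ?eqxx.
- move=> m1 m2 [S1 domS1 <-] [S2 domS2 <-].
  by rewrite /minn; case: ifP => _; [exists S1 | exists S2].
- by move=> S domS; exists S.
Qed.

Lemma is_mds_card_le D : dominating e setT D -> #|D| <= gamma e setT -> is_mds e D.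
Proof. by move=> domD leD; rewrite /is_mds domD eqn_leq leD gamma_le_card. Qed.

Lemma coronaP v : reflect (exists2 D, is_mds e D & v \in D) (v \in corona e).
Proof. by rewrite inE; apply: (iffP existsP) => [[D /andP[]] | [D]]; exists D => //; apply/andP. Qed.

Lemma notin_coreP v : reflect (exists2 D, is_mds e D & v \notin D) (v \notin core e).
Proof.
rewrite inE; apply: (iffP forallPn) => [[D] | [D mdsD vD]].
  by rewrite negb_imply => /andP[]; exists D.
by exists D; rewrite negb_imply mdsD.
Qed.

Lemma dominating_setD1 v D :
  dominating e setT D -> v \notin D -> dominating e (setT :\ v) D.
Proof.
case/dominatingP => _ domD vD; apply/dominatingP; split; last by move=> x _; apply: domD.
by apply/subsetP => x xD; rewrite !inE andbT; apply: contraNneq vD => <-.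
Qed.

Lemma dominating_meet_cnbhd v D : dominating e setT D -> D :&: cnbhd e v != set0.
Proof.
case/dominatingP => _ /(_ v (in_setT v)) [y yD vy].
by apply/set0Pn; exists y; rewrite !inE yD.
Qed.

Lemma dominating_isolated v D : isolated e v -> dominating e setT D -> v \in D.
Proof.
move=> /forallP isov /(dominating_meet_cnbhd v) /set0Pn [y].
rewrite !inE => /andP[yD /orP[/eqP <- // | evy]].
by have := isov y; rewrite evy.
Qed.

Lemma dominating_setU1_cnbhd v w X :
  w \in cnbhd e v -> dominating e (setT :\ v) X -> dominating e setT (w |: X).
Proof.
rewrite inE => vw /dominatingP [_ domX]; apply/dominatingP; split; first exact: subsetT.
move=> x _; have [-> | xv] := eqVneq x v; first by exists w; rewrite ?setU11.
have [|y yX xy] := domX x; first by rewrite !inE xv.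
by exists y; rewrite ?setU1r.
Qed.

Lemma dominating_setD1_meet v S :
  dominating e (setT :\ v) S -> S :&: cnbhd e v != set0 -> dominating e setT S.
Proof.
move=> domS /set0Pn [y /setIP[yS vy]].
by rewrite -(setUidPr (_ : [set y] \subset S)) ?sub1set // (dominating_setU1_cnbhd vy).
Qed.

Lemma mds_setU1_Vminus v w : v \in Vminus e -> w \in cnbhd e v ->
  exists2 X : {set T}, v \notin X & is_mds e (w |: X).
Proof.
rewrite inE => ltv vw; have [X domX cardX] := gamma_attained (setT :\ v).
exists X; first by case/dominatingP: domX => /subsetD1P[].
apply: is_mds_card_le; first exact: dominating_setU1_cnbhd domX.
by rewrite cardsU1 cardX (leq_trans _ ltv) // -add1n leq_add2r leq_b1.
Qed.

Lemma Vminus_in_corona v : v \in Vminus e -> v \in corona e.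
Proof.
move=> Vv; have [|X _ mdsX] := mds_setU1_Vminus Vv (w := v); first by rewrite inE eqxx.
by apply/coronaP; exists (v |: X); rewrite ?setU11.
Qed.

Lemma Vminus_notin_core v : irreflexive e ->
  v \in Vminus e -> ~~ isolated e v -> v \notin core e.
Proof.
move=> e_irr Vv /forallPn [w]; rewrite negbK => evw.
have [|X vX mdsX] := mds_setU1_Vminus Vv (w := w); first by rewrite inE evw orbT.
apply/notin_coreP; exists (w |: X); rewrite // in_setU1 negb_or vX andbT.
by apply: contraTneq evw => <-; rewrite e_irr.
Qed.

End Domination.

Section AddLeaf.
Variables (T : finType) (e : rel T) (v : T).

Definition leaf_proj (U : {set option T}) : {set T} := v |: [set x | Some x \in U].

Lemma dominating_leaf_proj U : dominating (add_leaf e v) setT U ->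
  dominating e setT (leaf_proj U) /\ #|leaf_proj U| <= #|U|.
Proof.
move/dominatingP => [_ domU]; set Y := [set x | Some x \in U].
split.
  apply/dominatingP; split; first exact: subsetT.
  move=> x _; have [[z|] zU xz] := domU (Some x) (in_setT _).
    by exists z; rewrite ?setU1r ?inE.
  by move: xz => /= /eqP ->; exists v; rewrite ?setU11 ?eqxx.
have cardY : #|Some @: Y| = #|Y| := card_imset _ (@Some_inj _).
have sYU : Some @: Y \subset U :\ None.
  by apply/subsetP => _ /imsetP [z zY ->]; rewrite !inE; rewrite inE in zY.
rewrite /leaf_proj cardsU1 -cardY; have [NU | NU] := boolP (None \in U).
  rewrite (cardsD1 None U) NU; exact: leq_add (leq_b1 _) (subset_leq_card sYU).
(* The leaf u = None is then dominated by Some v, so v is already counted. *)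
have [[z|] zU uz] := domU None (in_setT _); last by rewrite zU in NU.
move: uz => /= /eqP zv; rewrite (_ : v \in Y) ?inE -?zv //= add0n.
by rewrite (leq_trans (subset_leq_card sYU)) // subset_leq_card // subD1set.
Qed.

Lemma dominating_leaf_lift D : dominating e setT D -> v \in D ->
  dominating (add_leaf e v) setT (Some @: D).
Proof.
move=> /dominatingP [_ domD] vD; apply/dominatingP; split; first exact: subsetT.
case=> [x|] _; last by exists (Some v); rewrite ?imset_f //= eqxx.
by have [y yD xy] := domD x (in_setT _); exists (Some y); rewrite ?imset_f.
Qed.

Lemma gamma_add_leafE : (gamma (add_leaf e v) setT == gamma e setT) = (v \in corona e).
Proof.
have [U domU cardU] := gamma_attained (add_leaf e v) setT.
have [domP leP] := dominating_leaf_proj domU.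
have ge_leaf : gamma e setT <= gamma (add_leaf e v) setT.
  by rewrite -cardU (leq_trans (gamma_le_card domP)).
apply/idP/coronaP => [/eqP eq_leaf | [D /andP[domD /eqP cardD] vD]].
  by exists (leaf_proj U); rewrite ?setU11 // is_mds_card_le // (leq_trans leP) // cardU eq_leaf.
rewrite eqn_leq ge_leaf andbT -cardD.
rewrite -(card_imset _ (@Some_inj _)).
exact: gamma_le_card (dominating_leaf_lift domD vD).
Qed.

End AddLeaf.

Theorem corollary1 (T : finType) (e : rel T)
  (e_sym : symmetric e) (e_irr : irreflexive e) (v : T) :
  (v \in corona e :\: core e) <->
  ((v \in Vminus e) && ~~ isolated e v)
  \/ [/\ v \in V0 e,
         exists S : {set T},
           [/\ S \subset setT :\ v, #|S| = gamma e setT,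
               dominating e (setT :\ v) S & S :&: cnbhd e v != set0]
       & gamma (add_leaf e v) setT = gamma e setT].
Proof.
rewrite inE andbC -gamma_add_leafE; split.
- case/andP=> /eqP eq_leaf /notin_coreP [D /andP[domD /eqP cardD] vD].
  have domDv := dominating_setD1 domD vD.
  have [ltv | gev] := ltnP (gamma e (setT :\ v)) (gamma e setT).
    left; rewrite inE ltv /=; apply: contra vD => isov.
    exact: dominating_isolated isov domD.
  have eqv : gamma e (setT :\ v) = gamma e setT.
    by apply/anti_leq; rewrite gev -cardD gamma_le_card.
  right; split; rewrite ?inE ?eqv //; exists D; split => //.
    by rewrite subsetD1 subsetT.
  exact: dominating_meet_cnbhd.
- case=> [/andP[Vv nisov] | [_ [S [sSv cardS domS meetS]] eq_leaf]].
    by rewrite gamma_add_leafE Vminus_in_corona ?Vminus_notin_core.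
  rewrite eq_leaf eqxx /=; apply/notin_coreP; exists S; last by case/subsetD1P: sSv.
  by rewrite is_mds_card_le ?cardS // (dominating_setD1_meet domS meetS).
Qed.
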